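(* For every integer $n\ge 1$, let $M(n)$ denote the maximum modulus of an independence root over all (simple) graphs on $n$ vertices. Then $$M(n)\ge \begin{cases} 3^{\frac{n-3}{3}} & \text{if } n\equiv 0 \pmod 3,\\ 3^{\frac{n-1}{3}} & \text{if } n\equiv 1 \pmod 3,\\ 3^{\frac{n-2}{3}} & \text{if } n\equiv 2 \pmod 3.\end{cases}$$
   Context: For a finite simple graph $G$, the independence polynomial is $i(G,x)=\sum_{k=0}^{\alpha(G)} i_k x^k$, where $i_k$ is the number of independent sets of size $k$ in $G$ (with $i_0=1$) and $\alpha(G)$ is the independence number (maximum size of an independent set). Its roots in $\mathbb{C}$ are the independence roots of $G$. *)

From mathcomp Require Import all_boot all_order all_algebra all_field.
Set Implicit Arguments. Unset Strict Implicit. Unset Printing Implicit Defensive.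
Import Order.TTheory GRing.Theory Num.Theory.
Local Open Scope ring_scope.

Definition simple_graph (n : nat) (E : {set {set 'I_n}}) : bool :=
  [forall e in E, #|e| == 2%N].

Definition independent (n : nat) (E : {set {set 'I_n}}) (S : {set 'I_n}) : bool :=
  [forall e in E, ~~ (e \subset S)].

Definition indep_poly (n : nat) (E : {set {set 'I_n}}) : {poly algC} :=
  \sum_(S : {set 'I_n} | independent E S) 'X^#|S|.

Definition rootsC (p : {poly algC}) : seq algC := sval (closed_field_poly_normal p).

(* Maximum modulus of an independence root of G (0 if there are none). *)
Definition max_indep_root_modulus (n : nat) (E : {set {set 'I_n}}) : algC :=
  \big[Num.max/0]_(z <- rootsC (indep_poly E)) `|z|.

Definition M (n : nat) : algC :=
  \big[Num.max/0]_(E : {set {set 'I_n}} | simple_graph E) max_indep_root_modulus E.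

(* The graph G on n >= 3k + 1 vertices consisting of k triangles, a hub adjacent
   to two vertices of each triangle, and m = n - 3k - 1 isolated vertices has
   independence polynomial
     i(G, x) = (1 + 3x)^k (1 + x)^m + x (1 + x)^(k + m),
   by deleting the hub.  At x = -t this is, up to sign,
     g(t) = ((3t - 1)^k - t (t - 1)^k) (t - 1)^m,
   and g(3^k) >= 0 >= g(4^k + 2), so by the intermediate value theorem in the
   real algebraic numbers i(G, x) has a root x <= -3^k.  Taking
   k = floor((n - 1) / 3) gives all three cases. *)

From mathcomp Require Import all_boot all_order all_algebra all_field.
From mathcomp Require Import polyrcf zify ring lra.
Set Implicit Arguments. Unset Strict Implicit. Unset Printing Implicit Defensive.
Import Order.TTheory GRing.Theory Num.Theory.
Local Open Scope ring_scope.

Section IndependencePolynomial.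
Variables (n : nat) (E : {set {set 'I_n}}).
Hypothesis simpleE : simple_graph E.

Definition adj (a b : 'I_n) := [set a; b] \in E.

Lemma adjC a b : adj a b = adj b a.
Proof. by rewrite /adj setUC. Qed.

Lemma adj_irrefl a : ~~ adj a a.
Proof.
apply/negP => aa; have := forallP simpleE [set a; a].
by rewrite /adj in aa; rewrite aa /= cards2 eqxx.
Qed.

Lemma independentP (S : {set 'I_n}) :
  reflect {in S &, forall a b, ~~ adj a b} (independent E S).
Proof.
apply: (iffP forallP) => [indS a b aS bS | noadj e].
  apply/negP => abE; have := indS [set a; b]; rewrite [_ \in E]abE /= => /negP; apply.
  by apply/subsetP => x; rewrite !inE => /orP[]/eqP->.
apply/implyP => eE; apply/negP => eS.
have /cards2P[x [y [_ exy]]] := implyP (forallP simpleE e) eE.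
rewrite exy in eS eE.
have xS : x \in S by apply: (subsetP eS); rewrite !inE eqxx.
have yS : y \in S by apply: (subsetP eS); rewrite !inE eqxx orbT.
by move: (noadj x y xS yS); rewrite /adj eE.
Qed.

Definition indep_poly_on (U : {set 'I_n}) : {poly algC} :=
  \sum_(S : {set 'I_n} | (S \subset U) && independent E S) 'X^#|S|.

Lemma indep_poly_onT : indep_poly E = indep_poly_on setT.
Proof. by apply: eq_bigl => S; rewrite subsetT. Qed.

Lemma indep_poly_on0 : indep_poly_on set0 = 1.
Proof.
rewrite /indep_poly_on (eq_bigl (pred1 set0)) ?big_pred1_eq ?cards0 //.
move=> S; rewrite subset0 /=; case: eqP => // ->.
by apply/independentP => a; rewrite inE.
Qed.

Lemma indep_poly_on_delete (U : {set 'I_n}) v : v \in U ->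
  indep_poly_on U =
  indep_poly_on (U :\ v) + 'X * indep_poly_on [set u in U :\ v | ~~ adj u v].
Proof.
move=> vU; rewrite /indep_poly_on (bigID (fun S : {set 'I_n} => v \notin S)) /=.
congr (_ + _); first by apply: eq_bigl => S; rewrite subsetD1 andbAC.
rewrite mulr_sumr (reindex_onto (fun S => v |: S) (fun S => S :\ v)) /=; last first.
  by move=> S /andP[_]; rewrite negbK => ?; rewrite setD1K.
apply: eq_big => S; last first.
  move=> /andP[_ /eqP eS]; have vS : v \notin S by rewrite -eS !inE eqxx.
  by rewrite cardsU1 vS add1n exprS.
rewrite in_setU1 eqxx /= andbT; apply/idP/idP.
  move=> /andP[/andP[/subsetP sU /independentP indS] /eqP eS].
  have vS : v \notin S by rewrite -eS !inE eqxx.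
  have SvS u : u \in S -> u \in v |: S by rewrite !inE => ->; rewrite orbT.
  apply/andP; split; last by apply/independentP => a b /SvS aS /SvS bS; apply: indS.
  apply/subsetP => u uS; rewrite !inE sU ?SvS // andbT.
  by rewrite (indS u v) ?setU11 ?SvS // andbT; apply: contraNneq vS => <-.
move=> /andP[/subsetP sU /independentP indS].
have {}sU u : u \in S -> [/\ u \in U, u != v & ~~ adj u v].
  by move=> /sU; rewrite !inE => /andP[/andP[-> ->] ->].
have vS : v \notin S by apply/negP => /sU[_ /eqP].
rewrite setU1K // eqxx andbT; apply/andP; split.
  by apply/subsetP => u; rewrite in_setU1 => /orP[/eqP-> // | /sU[]].
apply/independentP => a b; rewrite !in_setU1.
move=> /orP[/eqP-> | aS] /orP[/eqP-> | bS].
- exact: adj_irrefl.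
- by rewrite adjC; have [] := sU b bS.
- by have [] := sU a aS.
- exact: indS.
Qed.

Lemma indep_poly_neq0 : indep_poly E != 0.
Proof.
apply/eqP => /(congr1 (horner^~ 0)); rewrite horner0 /indep_poly horner_sum.
have ind0 : independent E set0 by apply/independentP => a; rewrite inE.
rewrite (bigD1 set0) //= big1 ?addr0 ?hornerXn ?cards0 ?expr0 => [/eqP|S /andP[_ S0]].
  by rewrite oner_eq0.
by rewrite hornerXn expr0n cards_eq0 (negbTE S0).
Qed.

End IndependencePolynomial.

Lemma mem_rootsC (p : {poly algC}) z : p != 0 -> root p z -> z \in rootsC p.
Proof.
move=> p0; rewrite /rootsC; case: closed_field_poly_normal => r /= {1}->.
by rewrite rootZ ?lead_coef_eq0 // root_prod_XsubC.
Qed.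

Lemma real_le_max (R : numDomainType) (x y : R) :
  x \is Num.real -> y \is Num.real -> (x <= Num.max x y) && (y <= Num.max x y).
Proof.
move=> xR yR; rewrite maxEle; case: ifP => xy; rewrite lexx ?xy //=.
by have /orP[|] := real_leVge xR yR; rewrite ?xy.
Qed.

Lemma le_bigmax_real (R : numDomainType) (I : eqType) (r : seq I) (P : pred I)
    (F : I -> R) (x0 : R) j :
  x0 \is Num.real -> (forall i, F i \is Num.real) -> j \in r -> P j ->
  F j <= \big[Num.max/x0]_(i <- r | P i) F i.
Proof.
move=> x0R FR; elim: r => // a r IHr; rewrite in_cons big_cons.
have maxR : \big[Num.max/x0]_(i <- r | P i) F i \is Num.real by apply: bigmax_real.
have /andP[Fa_le le_max] := real_le_max (FR a) maxR.
move=> /orP[/eqP-> Pj | jr Pj]; first by rewrite Pj.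
by case: (P a); [apply: le_trans le_max|]; apply: IHr.
Qed.

Lemma root_indep_poly_norm_le_M n (E : {set {set 'I_n}}) z :
  simple_graph E -> root (indep_poly E) z -> `|z| <= M n.
Proof.
have normR (y : algC) : `|y| \is Num.real by rewrite realE normr_ge0.
move=> simpleE rz; apply: (@le_trans _ _ (max_indep_root_modulus E)).
  by apply: le_bigmax_real; rewrite ?mem_rootsC ?indep_poly_neq0.
by apply: le_bigmax_real; rewrite ?mem_index_enum // => E'; apply: bigmax_real.
Qed.

(* Vertices [3j, 3j+1, 3j+2] (j < k) form k triangles; the hub [3k] is adjacent
   to [3j+1] and [3j+2]; all other vertices are isolated. *)
Definition hub_adj (k a b : nat) : bool :=
  [|| [&& a < 3 * k, b < 3 * k, a %/ 3 == b %/ 3 & a != b],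
      [&& a == 3 * k, b < 3 * k & b %% 3 != 0]
    | [&& b == 3 * k, a < 3 * k & a %% 3 != 0]]%N.

Definition hub_graph n k : {set {set 'I_n}} :=
  [set e | [exists u : 'I_n, exists w : 'I_n, hub_adj k u w && (e == [set u; w])]].

Lemma hub_graph_simple n k : simple_graph (hub_graph n k).
Proof.
apply/forallP => e; apply/implyP; rewrite inE => /existsP[u /existsP[w /andP[uw /eqP->]]].
by rewrite cards2 (_ : u != w) //; move: uw; rewrite -val_eqE /hub_adj /=; lia.
Qed.

Lemma adj_hub_graph n k (a b : 'I_n) : adj (hub_graph n k) a b = hub_adj k a b.
Proof.
rewrite /adj inE; apply/idP/idP => [|ab]; last first.
  by apply/existsP; exists a; apply/existsP; exists b; rewrite ab eqxx.
move=> /existsP[u /existsP[w /andP[uw /eqP e]]].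
have aI : a \in [set u; w] by rewrite -e !inE eqxx.
have bI : b \in [set u; w] by rewrite -e !inE eqxx orbT.
have uI : u \in [set a; b] by rewrite e !inE eqxx.
have wI : w \in [set a; b] by rewrite e !inE eqxx orbT.
move: aI bI uI wI uw; rewrite !inE -!val_eqE /hub_adj /=; lia.
Qed.

(* Vertex sets are given by predicates on [nat], so that the bookkeeping of the
   deletions below is linear arithmetic. *)
Definition hub_poly n k (f : nat -> bool) :=
  indep_poly_on (hub_graph n k) [set u : 'I_n | f u].

Lemma eq_hub_poly n k (f g : nat -> bool) :
  (forall u, u < n -> f u = g u)%N -> hub_poly n k f = hub_poly n k g.
Proof.
by move=> fg; congr indep_poly_on; apply/setP => u; rewrite !inE fg.
Qed.

Lemma hub_poly_pred0 n k (f : nat -> bool) :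
  (forall u, u < n -> f u = false)%N -> hub_poly n k f = 1.
Proof.
move=> f0; rewrite (eq_hub_poly _ f0) -(indep_poly_on0 (hub_graph_simple n k)).
by congr indep_poly_on; apply/setP => u; rewrite !inE.
Qed.

Lemma hub_poly_delete n k (f f1 f2 : nat -> bool) c : (c < n)%N -> f c ->
  (forall u, u < n -> f1 u = f u && (u != c))%N ->
  (forall u, u < n -> f2 u = [&& f u, u != c & ~~ hub_adj k u c])%N ->
  hub_poly n k f = hub_poly n k f1 + 'X * hub_poly n k f2.
Proof.
move=> cn fc f1E f2E; rewrite /hub_poly.
rewrite (indep_poly_on_delete (hub_graph_simple n k) (v := Ordinal cn)) ?inE //.
congr (_ + _ * _); congr indep_poly_on; apply/setP => u.
  by rewrite !inE f1E // -val_eqE andbC.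
by rewrite !inE f2E // adj_hub_graph -val_eqE /= andbCA andbA.
Qed.

Definition hub_indep_poly {R : comRingType} k m : {poly R} :=
  (1 + 3%:R * 'X) ^+ k * (1 + 'X) ^+ m + 'X * (1 + 'X) ^+ (k + m).

Section HubGraphPolynomial.
Variables (n k m : nat).
Hypothesis nE : n = (3 * k + 1 + m)%N.

Lemma hub_poly_isolated r : (r <= m)%N ->
  hub_poly n k (fun u => 3 * k < u < 3 * k + 1 + r)%N = (1 + 'X) ^+ r.
Proof.
elim: r => [|r IHr] rm; first by rewrite expr0; apply: hub_poly_pred0 => u un; lia.
rewrite (@hub_poly_delete _ _ _ (fun u => 3 * k < u < 3 * k + 1 + r)%N
                          (fun u => 3 * k < u < 3 * k + 1 + r)%N (3 * k + 1 + r)).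
- by rewrite IHr 1?ltnW // exprS; ring.
- lia.
- lia.
- by move=> u un; lia.
- by move=> u un; rewrite /hub_adj; lia.
Qed.

Lemma hub_poly_triangles j : (j <= k)%N ->
  hub_poly n k (fun u => (u < 3 * j) || (3 * k < u))%N =
  (1 + 3%:R * 'X) ^+ j * (1 + 'X) ^+ m.
Proof.
elim: j => [|j IHj] jk.
  by rewrite expr0 mul1r -(hub_poly_isolated (leqnn m)); apply: eq_hub_poly => u un; lia.
pose T0 u := ((u < 3 * j) || (3 * k < u))%N.
pose T1 u := [|| u < 3 * j, u == 3 * j + 1, u == 3 * j + 2 | 3 * k < u]%N.
pose T2 u := [|| u < 3 * j, u == 3 * j + 2 | 3 * k < u]%N.
rewrite (@hub_poly_delete _ _ _ T1 T0 (3 * j)); last first.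
- by move=> u un; rewrite /T0 /T1 /hub_adj; lia.
- by move=> u un; rewrite /T1; lia.
- lia.
- lia.
rewrite (@hub_poly_delete _ _ T1 T2 T0 (3 * j + 1)); last first.
- by move=> u un; rewrite /T0 /T1 /hub_adj; lia.
- by move=> u un; rewrite /T1 /T2; lia.
- by rewrite /T1; lia.
- lia.
rewrite (@hub_poly_delete _ _ T2 T0 T0 (3 * j + 2)); last first.
- by move=> u un; rewrite /T0 /T2 /hub_adj; lia.
- by move=> u un; rewrite /T0 /T2; lia.
- by rewrite /T2; lia.
- lia.
by rewrite IHj 1?ltnW // exprS; ring.
Qed.

Lemma hub_poly_nonneighbours j : (j <= k)%N ->
  hub_poly n k (fun u => (u < 3 * j) && (u %% 3 == 0) || (3 * k < u))%N =
  (1 + 'X) ^+ (j + m).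
Proof.
elim: j => [|j IHj] jk.
  by rewrite -(hub_poly_isolated (leqnn m)); apply: eq_hub_poly => u un; lia.
pose N u := ((u < 3 * j) && (u %% 3 == 0) || (3 * k < u))%N.
rewrite (@hub_poly_delete _ _ _ N N (3 * j)); last first.
- by move=> u un; rewrite /N /hub_adj; lia.
- by move=> u un; rewrite /N; lia.
- lia.
- lia.
by rewrite IHj 1?ltnW // addSn exprS; ring.
Qed.

Lemma indep_poly_hub_graph : indep_poly (hub_graph n k) = hub_indep_poly k m.
Proof.
have -> : indep_poly (hub_graph n k) = hub_poly n k xpredT.
  by rewrite indep_poly_onT; congr indep_poly_on.
rewrite (@hub_poly_delete _ _ _ (fun u => (u < 3 * k) || (3 * k < u))%N
    (fun u => (u < 3 * k) && (u %% 3 == 0) || (3 * k < u))%N (3 * k)); last first.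
- by move=> u un; rewrite /hub_adj; lia.
- by move=> u un; lia.
- by [].
- lia.
by rewrite hub_poly_triangles ?hub_poly_nonneighbours.
Qed.

End HubGraphPolynomial.

Lemma map_hub_indep_poly (R S : comRingType) (f : {rmorphism R -> S}) k m :
  map_poly f (hub_indep_poly k m) = hub_indep_poly k m.
Proof.
by rewrite /hub_indep_poly !(rmorphD, rmorphM, rmorphXn, rmorph1, rmorph_nat) /= map_polyX.
Qed.

Definition hub_g (R : comRingType) k m (t : R) :=
  ((3%:R * t - 1) ^+ k - t * (t - 1) ^+ k) * (t - 1) ^+ m.

Lemma hub_indep_polyN (R : comRingType) k m (t : R) :
  (hub_indep_poly k m).[- t] = (-1) ^+ (k + m) * hub_g k m t.
Proof.
rewrite -[_.[- t]]/(horner_eval (- t) _).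
rewrite !(rmorphD, rmorphM, rmorphXn, rmorph1, rmorph_nat) /= horner_evalE hornerX.
rewrite (_ : 1 + 3%:R * - t = - (3%:R * t - 1)); last by ring.
rewrite (_ : 1 - t = - (t - 1)); last by ring.
rewrite ![(- (_ - 1)) ^+ _]exprNn /hub_g !exprD; ring.
Qed.

Lemma hub_g_pow3_ge0 (R : realDomainType) k m : 0 <= hub_g k m (3%:R ^+ k : R).
Proof.
set a : R := 3%:R ^+ k.
have a_ge1 : 1 <= a by rewrite exprn_ege1 // ler1n.
rewrite /hub_g mulr_ge0 ?exprn_ge0 ?subr_ge0 //.
have -> : a * (a - 1) ^+ k = (3%:R * a - 3%:R) ^+ k.
  by rewrite -[in LHS]/a -exprMn; congr (_ ^+ _); ring.
by apply: lerXn2r; rewrite ?nnegrE; lra.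
Qed.

Lemma hub_g_pow4_le0 (R : realDomainType) k m : hub_g k m (4%:R ^+ k + 2%:R : R) <= 0.
Proof.
set b : R := 4%:R ^+ k.
have b_ge1 : 1 <= b by rewrite exprn_ege1 // ler1n.
rewrite /hub_g mulr_le0_ge0 ?exprn_ge0 ?subr_le0 //; last lra.
have -> : b + 2%:R - 1 = b + 1 by ring.
apply: (@le_trans _ _ ((4%:R * (b + 1)) ^+ k)).
  by apply: lerXn2r; rewrite ?nnegrE; lra.
by rewrite exprMn -/b ler_wpM2r ?exprn_ge0 //; lra.
Qed.

Lemma hub_indep_poly_root_le (R : rcfType) k m :
  exists2 x : R, x <= - 3%:R ^+ k & root (hub_indep_poly k m) x.
Proof.
have pow3_le_pow4 : 3%:R ^+ k <= 4%:R ^+ k + 2%:R :> R.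
  apply: (@le_trans _ _ (4%:R ^+ k)); last by rewrite lerDl.
  by rewrite lerXn2r ?nnegrE ?ler0n ?ler_nat.
have ba : - (4%:R ^+ k + 2%:R) <= - 3%:R ^+ k :> R by rewrite lerN2.
have sign_change : (hub_indep_poly k m).[- (4%:R ^+ k + 2%:R)] *
                   (hub_indep_poly k m).[- 3%:R ^+ k] <= 0 :> R.
  rewrite !hub_indep_polyN mulrACA -expr2 sqrr_sign mul1r.
  by rewrite mulrC mulr_ge0_le0 ?hub_g_pow3_ge0 ?hub_g_pow4_le0.
have [x] := polyrcf.poly_ivt ba sign_change.
by rewrite in_itv => /andP[_ ?] ?; exists x.
Qed.

Lemma M_ge_pow3 n k : (3 * k + 1 <= n)%N -> 3%:R ^+ k <= M n.
Proof.
move=> kn; set m := (n - (3 * k + 1))%N; have nE : n = (3 * k + 1 + m)%N by lia.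
have [x x_le rx] := hub_indep_poly_root_le algR k m.
have rz : root (indep_poly (hub_graph n k)) (algRval x).
  by rewrite (indep_poly_hub_graph nE) -(map_hub_indep_poly algRval) fmorph_root.
apply: le_trans (root_indep_poly_norm_le_M (hub_graph_simple n k) rz).
have : algRval x <= algRval (- 3%:R ^+ k) := x_le.
rewrite rmorphN rmorphXn rmorph_nat lerNr -normrN => /le_trans; apply.
by rewrite real_ler_norm ?rpredN ?algRvalP.
Qed.

Theorem proposition2 (n : nat) : (1 <= n)%N ->
  (if (n %% 3 == 0)%N then 3%:R ^+ ((n - 3) %/ 3)%N
   else if (n %% 3 == 1)%N then 3%:R ^+ ((n - 1) %/ 3)%N
   else 3%:R ^+ ((n - 2) %/ 3)%N) <= M n :> algC.
Proof. by move=> n_gt0; do 2?case: ifP => _; apply: M_ge_pow3; lia. Qed.
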